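(* Let $d > 1$ be an integer and let $K = \operatorname{Frac}(\mathcal{O})$ be the field of fractions of a complete discrete valuation ring $\mathcal{O}$ whose residue field is finite. In the coefficient-choosing game of degree $d$ over $K$, whichever player makes the last move has a winning strategy.
   Context: The coefficient-choosing game of degree $d$ over a commutative ring $R$ with unity: Nora and Wanda alternately choose coefficients of $f(x) = a_d x^d + \cdots + a_0$; on each move the current player picks a not-yet-chosen coefficient and assigns it a value in $R$, subject to $a_d \neq 0$, $a_0 \neq 0$. After all $d+1$ coefficients are chosen, Wanda wins if $f$ has a root in $\operatorname{Frac}(R)$ (here $R = K$ is a field, so a root in $K$), and Nora wins otherwise. Who moves first is fixed in advance, which determines who makes the last move. *)

From HB Require Import structures.
From mathcomp Require Import all_boot all_order all_algebra.
Set Implicit Arguments. Unset Strict Implicit. Unset Printing Implicit Defensive.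
Import Order.TTheory GRing.Theory Num.Theory.
Local Open Scope ring_scope.

Definition dvdR (R : idomainType) (a x : R) : Prop := exists c : R, x = a * c.

(* pi is a uniformizer of the DVR R: every nonzero element is uniquely-
   (uniqueness automatic in a domain) a unit times a power of pi, pi nonzero
   non-unit. *)
Definition is_uniformizer (R : idomainType) (pi : R) : Prop :=
  [/\ pi != 0, pi \isn't a GRing.unit &
      forall x : R, x != 0 -> exists (u : R) (n : nat), u \is a GRing.unit /\ x = u * pi ^+ n].

Definition madic_complete (R : idomainType) (pi : R) : Prop :=
  forall a : nat -> R,
    (forall n : nat, exists N : nat, forall i j : nat, (N <= i)%N -> (N <= j)%N ->
        dvdR (pi ^+ n) (a i - a j)) ->
    exists L : R, forall n : nat, exists N : nat, forall i : nat, (N <= i)%N ->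
        dvdR (pi ^+ n) (a i - L).

Definition finite_residue (R : idomainType) (pi : R) : Prop :=
  exists s : seq R, forall x : R, exists2 y : R, y \in s & dvdR pi (x - y).

Definition complete_dvr_finite_residue (R : idomainType) : Prop :=
  exists pi : R, [/\ is_uniformizer pi, madic_complete pi & finite_residue pi].

Definition is_fraction_field (R : idomainType) (K : fieldType) (iota : R -> K) : Prop :=
  injective iota /\ forall k : K, exists a b : R, b != 0 /\ k = iota a / iota b.

Inductive player := Nora | Wanda.

Definition other (P : player) : player := match P with Nora => Wanda | Wanda => Nora end.

Definition player_eqb (P Q : player) : bool :=
  match P, Q with Nora, Nora | Wanda, Wanda => true | _, _ => false end.

(* A position: a partial assignment of the coefficients a_0, ..., a_d. *)
Definition position (K : Type) (d : nat) := 'I_d.+1 -> option K.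

Definition nchosen (K : Type) (d : nat) (p : position K d) : nat :=
  #|[pred i : 'I_d.+1 | isSome (p i)]|.

Definition mover_at (first : player) (k : nat) : player :=
  if odd k then other first else first.

(* the player making the last ((d+1)-th) move *)
Definition last_mover (d : nat) (first : player) : player := mover_at first d.

Definition legal (K : fieldType) (d : nat) (i : 'I_d.+1) (a : K) : Prop :=
  ((i : nat) = 0%N \/ (i : nat) = d) -> a != 0.

Definition assign (K : Type) (d : nat) (p : position K d) (i : 'I_d.+1) (a : K)
  : position K d := fun j => if j == i then Some a else p j.

Definition poly_of (K : fieldType) (d : nat) (p : position K d) : {poly K} :=
  \sum_(i < d.+1) (odflt 0 (p i)) *: 'X^i.

Definition wins_final (K : fieldType) (d : nat) (P : player) (p : position K d) : Prop :=
  match P with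
  | Wanda => exists x : K, root (poly_of p) x
  | Nora => ~ (exists x : K, root (poly_of p) x)
  end.

Fixpoint can_force (K : fieldType) (d : nat) (first : player) (P : player)
    (n : nat) (p : position K d) : Prop :=
  match n with
  | 0 => wins_final P p
  | n'.+1 =>
      if player_eqb (mover_at first (nchosen p)) P then
        exists (i : 'I_d.+1) (a : K),
          [/\ p i = None, legal i a & can_force first P n' (assign p i a)]
      else
        forall (i : 'I_d.+1) (a : K),
          p i = None -> legal i a -> can_force first P n' (assign p i a)
  end.

Definition has_winning_strategy (K : fieldType) (d : nat) (first P : player) : Prop :=
  can_force first P d.+1 (fun _ : 'I_d.+1 => None : option K).

From HB Require Import structures.
From mathcomp Require Import all_boot all_order all_algebra.
From mathcomp Require Import zify ring.
From Stdlib Require Import Classical.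
Set Implicit Arguments. Unset Strict Implicit. Unset Printing Implicit Defensive.
Import Order.TTheory GRing.Theory Num.Theory.
Local Open Scope ring_scope.

(* Let v be the valuation of K and rho the image of a uniformizer.
   If Wanda moves last, she waits for the last free coefficient a_i. The polynomial g
   formed by the other coefficients is nonzero (one of its end coefficients is), and K is
   infinite, so she picks x <> 0 with g(x) <> 0 and plays a_i = - g(x) / x^i <> 0.
   If Nora moves last, she fills the critical inner positions herself with 0, so that the
   last free position i is either isolable or, when d <= 4, f = a_0 + a_i X^i + a_d X^d.
   At an isolable i she plays rho^E with E very negative, chosen so that both edges of the
   Newton polygon at (i, E) have non-integral slopes: then for every x <> 0 exactly one
   term of f(x) has least valuation, so f(x) <> 0. For the trinomial only the slope k of
   the edge from (0, v a_0) to (d, v a_d) is dangerous. When v(x) = k all three terms have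
   the same valuation and f(x) = rho^(v a_0) (w_0 + c u^i + w_d u^d) with units w_0, w_d, u;
   as the residue field is finite, Nora can choose the residue c of a_i so that this
   bracket is never divisible by the uniformizer. *)

(** * Newton polygon arithmetic *)

Lemma min_lt_above_chord (a j b ea eb ej m : int) : a < j < b ->
  (b - j) * ea + (j - a) * eb < (b - a) * ej ->
  Num.min (ea + a * m) (eb + b * m) < ej + j * m.
Proof.
move=> /andP[aj jb] above; set M := Num.min _ _.
have Ma : M <= ea + a * m by rewrite ge_min lexx.
have Mb : M <= eb + b * m by rewrite ge_min lexx orbT.
nia.
Qed.

Lemma lt_below_chord (a j b ea eb ej m : int) : a < j < b ->
  (b - a) * ej < (b - j) * ea + (j - a) * eb ->
  ea + a * m = eb + b * m -> ej + j * m < ea + a * m.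
Proof. move=> /andP[aj jb] below tie; nia. Qed.

Lemma collinear_tilt (d i k m e0 ed : int) : 0 < i < d -> e0 - ed = k * d ->
  [/\ m < k -> ed + d * m + 1 <= e0,
      m < k -> ed + d * m + 1 <= e0 - i * k + i * m,
      k < m -> e0 + 1 <= e0 - i * k + i * m
    & k < m -> e0 + 1 <= ed + d * m].
Proof. by move=> /andP[i0 id] hk; split=> mk; nia. Qed.

Lemma lt_of_very_negative (d a b c c' x y z E S : int) :
  0 <= a <= d -> 1 <= b -> 0 <= c -> 0 <= c' -> c + c' <= d ->
  `|x| <= S -> `|y| <= S -> `|z| <= S -> E <= - (2 * d * S + 1) ->
  a * x + b * E < c * y + c' * z.
Proof.
move=> /andP[a0 ad] b1 c0 c'0 cd; rewrite !ler_norml.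
move=> /andP[x1 x2] /andP[y1 y2] /andP[z1 z2] hE.
have S0 : 0 <= S by lia.
have dS : 0 <= d * S by apply: mulr_ge0; lia.
have ax : a * x <= d * S.
  by rewrite (le_trans (ler_wpM2l a0 x2)) // ler_wpM2r.
have bE : (b - 1) * E <= 0 by apply: mulr_ge0_le0; lia.
have cy : - (c * S) <= c * y by rewrite -mulrN ler_wpM2l // lerNl.
have cz : - (c' * S) <= c' * z by rewrite -mulrN ler_wpM2l // lerNl.
nia.
Qed.

Lemma dvdz_of_tie (a b ea eb m : int) : ea + a * m = eb + b * m -> (b - a %| ea - eb)%Z.
Proof. by move=> tie; apply/dvdzP; exists m; lia. Qed.

Lemma not_dvdz_lt (p n : int) : 0 < n < p -> ~~ (p %| n)%Z.
Proof.
move=> /andP[n0 np]; rewrite dvdzE.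
have n0' : (0 < `|n|)%N by lia.
by apply/negP => /(dvdn_leq n0'); lia.
Qed.

Lemma exists_le_not_dvdz (p a X : int) : 2 <= p ->
  exists2 E, E <= X & ~~ (p %| a - E)%Z.
Proof.
move=> p2; exists (a - 1 - p * (`|a - X| + 1)); first nia.
have -> : a - (a - 1 - p * (`|a - X| + 1)) = 1 + p * (`|a - X| + 1) by ring.
by rewrite rpredDr ?dvdz_mulr // not_dvdz_lt //; lia.
Qed.

Lemma exists_not_dvdz2 (p q a b : int) : 2 <= p -> 2 <= q ->
  (3 <= p) || (3 <= q) -> exists E, ~~ (p %| a - E)%Z && ~~ (q %| E - b)%Z.
Proof.
wlog p3 : p q a b / 3 <= p => [sym p2 q2|p2 q2 _].
  case/orP=> [p3|q3]; first by apply: sym => //; rewrite p3.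
  have [E /andP[hq hp]] := sym q p (- b) (- a) q3 q2 p2 ltac:(by rewrite q3).
  by exists (- E); move: hp hq; rewrite !opprK addrC [- E - b]addrC => -> ->.
have Ep k : (0 < k < 3)%N -> ~~ (p %| a - (a - k%:Z))%Z.
  by move=> hk; rewrite opprB addrC subrK not_dvdz_lt //; lia.
have [hq|hq] := boolP (q %| (a - 1) - b)%Z.
  exists (a - 2%:Z); rewrite Ep //=; apply: contraL hq => hq2.
  have -> : a - 1 - b = 1 + (a - 2%:Z - b) by ring.
  by rewrite rpredDr // not_dvdz_lt //; lia.
by exists (a - 1%:Z); rewrite Ep.
Qed.

Lemma exists_le_not_dvdz2 (p q a b X : int) : 2 <= p -> 2 <= q ->
  (3 <= p) || (3 <= q) ->
  exists E, [/\ E <= X, ~~ (p %| a - E)%Z & ~~ (q %| E - b)%Z].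
Proof.
move=> p2 q2 pq3; have [E0 /andP[hp hq]] := exists_not_dvdz2 a b p2 q2 pq3.
pose K := `|E0 - X| + 1; exists (E0 - p * q * K); split.
- have : 0 <= (p * q - 1) * K by apply: mulr_ge0; rewrite /K; nia.
  rewrite /K; lia.
- have -> : a - (E0 - p * q * K) = a - E0 + p * (q * K) by ring.
  by rewrite rpredDr ?dvdz_mulr.
- have -> : E0 - p * q * K - b = E0 - b + q * (- p * K) by ring.
  by rewrite rpredDr ?dvdz_mulr.
Qed.

Lemma exists_strict_argmin (I : finType) (P : pred I) (T : I -> int) (i0 : I) :
  P i0 ->
  (forall j k, P j -> P k -> j != k -> T j = T k -> exists2 l, P l & T l < T j) ->
  exists2 j0, P j0 & forall j, P j -> j != j0 -> T j0 < T j.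
Proof.
move=> Pi0 untie; case: (arg_minP T Pi0) => j0 Pj0 minj0.
exists j0 => // j Pj jj0; rewrite lt_neqAle minj0 // andbT.
apply/eqP => tie; have [l Pl] := untie j0 j Pj0 Pj ltac:(by rewrite eq_sym) tie.
by rewrite ltNge minj0.
Qed.

Lemma ord_inner (n : nat) (i : 'I_n.+1) : (0 < i < n)%N = (i != ord0) && (i != ord_max).
Proof. by rewrite -!(inj_eq val_inj) /= lt0n ltn_neqAle -ltnS ltn_ord andbT. Qed.

Lemma sum_ends (R : nzRingType) (d : nat) (c : 'I_d.+1 -> R) (x : R) : (0 < d)%N ->
  (forall j : 'I_d.+1, (0 < j < d)%N -> c j = 0) ->
  \sum_j c j * x ^+ j = c ord0 + c ord_max * x ^+ d.
Proof.
move=> d_gt0 inner0; have ends : ord_max != ord0 :> 'I_d.+1.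
  by rewrite -(inj_eq val_inj) /= -lt0n.
rewrite (bigD1 ord0) // (bigD1 ord_max) //= big1 ?addr0 ?expr0 ?mulr1 // => j /andP[j0 jd].
by rewrite inner0 ?mul0r // ord_inner j0 jd.
Qed.

Section NewtonAnchors.

(* T j stands for v(c_j x^j): the Newton polygon of f, tilted by the valuation of x. *)

Variables (d : nat) (i : 'I_d.+1) (P : pred 'I_d.+1) (T : 'I_d.+1 -> int).

Lemma ord_anchor_cases (j : 'I_d.+1) :
  [\/ j = ord0, j = i, j = ord_max | (0 < j < i)%N || (i < j < d)%N].
Proof.
have jd : (j <= d)%N by rewrite -ltnS.
case: (ltngtP j i) => [ji|ij|/val_inj ->]; last by constructor 2.
  case: (posnP j) => [j0|j0]; last by constructor 4.
  by constructor 1; apply: val_inj.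
case: (ltngtP j d) => [jd'|dj|jd'].
- by constructor 4; rewrite orbT.
- by rewrite ltnNge jd in dj.
- by constructor 3; apply: val_inj.
Qed.

Hypotheses (P0 : P ord0) (Pi : P i) (Pd : P ord_max).
Hypothesis T0i : ord0 != i -> T ord0 != T i.
Hypothesis Tid : i != ord_max -> T i != T ord_max.
Hypothesis T0d : ord0 != i -> i != ord_max -> T ord0 = T ord_max -> T i < T ord0.
Hypothesis above_left : forall j, P j -> (0 < j < i)%N -> Num.min (T ord0) (T i) < T j.
Hypothesis above_right : forall j, P j -> (i < j < d)%N -> Num.min (T i) (T ord_max) < T j.

Lemma anchors_no_tie j k : P j -> P k -> j != k -> T j = T k ->
  exists2 l, P l & T l < T j.
Proof.
have below_mid l : P l -> (0 < l < i)%N || (i < l < d)%N -> exists2 l', P l' & T l' < T l.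
  by move=> Pl /orP[/(above_left Pl)|/(above_right Pl)]; rewrite gt_min => /orP[]; eauto.
have tie_ends : (ord0 != ord_max :> 'I_d.+1) -> T ord0 = T ord_max -> exists2 l, P l & T l < T ord0.
  move=> ends tie; have [i0|i0] := eqVneq ord0 i.
    by move: Tid; rewrite -i0 tie eqxx => /(_ ends).
  have [id|id] := eqVneq i ord_max.
    by move: (T0i i0); rewrite id tie eqxx.
  by exists i => //; apply: T0d.
move=> Pj Pk jk tie.
case: (ord_anchor_cases k) => [kE|kE|kE|km]; last by rewrite tie; apply: below_mid.
all: case: (ord_anchor_cases j) => [jE|jE|jE|jm]; last exact: below_mid.
all: move: jk tie; rewrite jE kE ?eqxx // => jk tie.
- by move: T0i; rewrite eq_sym jk tie eqxx => /(_ isT).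
- by rewrite tie; apply: tie_ends (esym tie); rewrite eq_sym.
- by move: (T0i jk); rewrite tie eqxx.
- by move: Tid; rewrite eq_sym jk tie eqxx => /(_ isT).
- by move: (Tid jk); rewrite tie eqxx.
Qed.

End NewtonAnchors.

(* The positions i at which some exponent E makes both Newton polygon edges at (i, E)
   have non-integral slope. *)
Definition isolable (d i : nat) :=
  [|| i == 0, i == d | [&& 1 < i, 1 < d - i & (2 < i) || (2 < d - i)]]%N.

Lemma exists_vertex_exponent (d : nat) (i : 'I_d.+1) (e0 ed X : int) :
  (1 < d)%N -> isolable d i ->
  exists E, [/\ E <= X, ord0 != i -> ~~ (i%:Z %| e0 - E)%Z
              & i != ord_max -> ~~ (d%:Z - i%:Z %| E - ed)%Z].
Proof.
move=> d_gt1; case/or3P => [/eqP i0|/eqP id|/and3P[i2 di2 i3]].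
- have [E EX hE] := @exists_le_not_dvdz d%:Z ed X ltac:(by rewrite lez_nat).
  exists E; split => //; first by rewrite -(inj_eq val_inj) /= i0 eqxx.
  by rewrite i0 subr0 -opprB rpredN.
- have [E EX hE] := @exists_le_not_dvdz i%:Z e0 X ltac:(by rewrite lez_nat id).
  exists E; split => //; by rewrite -(inj_eq val_inj) /= id eqxx.
- have pq3 : (3 <= i%:Z) || (3 <= d%:Z - i%:Z).
    by case/orP: i3 => h; apply/orP; [left | right]; lia.
  have [E [EX h1 h2]] :=
    @exists_le_not_dvdz2 i%:Z (d%:Z - i%:Z) e0 ed X ltac:(lia) ltac:(lia) pq3.
  by exists E.
Qed.

Lemma vertex_far_below (d : nat) (i : 'I_d.+1) (e : 'I_d.+1 -> int) (S : int) :
  (forall j, j != i -> `|e j| <= S) -> e i <= - (2 * d%:Z * S + 1) ->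
  [/\ (0 < i < d)%N -> d%:Z * e i < (d%:Z - i%:Z) * e ord0 + i%:Z * e ord_max,
      forall j : 'I_d.+1, (0 < j < i)%N -> (i%:Z - j%:Z) * e ord0 + j%:Z * e i < i%:Z * e j
    & forall j : 'I_d.+1, (i < j < d)%N ->
        (d%:Z - j%:Z) * e i + (j%:Z - i%:Z) * e ord_max < (d%:Z - i%:Z) * e j].
Proof.
move=> eS ei.
have neq_i (j : 'I_d.+1) : (j < i)%N || (i < j)%N -> `|e j| <= S.
  by move=> ji; apply: eS; rewrite -(inj_eq val_inj) neq_ltn.
have i_le_d : (i <= d)%N by rewrite -ltnS.
split.
- move=> /andP[i0 id].
  have e0S : `|e ord0| <= S by rewrite neq_i ?i0.
  have edS : `|e ord_max| <= S by rewrite neq_i ?id ?orbT.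
  have := @lt_of_very_negative d 0 d (d%:Z - i%:Z) i (e ord0) (e ord0) (e ord_max) (e i) S.
  by rewrite mul0r add0r; apply => //; lia.
- move=> j /andP[j0 ji].
  have e0S : `|e ord0| <= S by rewrite neq_i ?(ltn_trans j0 ji).
  have ejS : `|e j| <= S by rewrite neq_i ?ji.
  have := @lt_of_very_negative d (i%:Z - j%:Z) j i 0 (e ord0) (e j) (e j) (e i) S.
  by rewrite mul0r !addr0; apply => //; lia.
- move=> j /andP[ij jd].
  have edS : `|e ord_max| <= S by rewrite neq_i ?(ltn_trans ij jd) ?orbT.
  have ejS : `|e j| <= S by rewrite neq_i ?ij ?orbT.
  have := @lt_of_very_negative d (j%:Z - i%:Z) (d%:Z - j%:Z) (d%:Z - i%:Z) 0
    (e ord_max) (e j) (e j) (e i) S.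
  by rewrite mul0r !addr0 [_ * e ord_max + _]addrC; apply => //; lia.
Qed.

Section Game.

Variables (K : fieldType) (d : nat).
Implicit Types (p : position K d) (i j : 'I_d.+1).

Definition coefs p j : K := odflt 0 (p j).

Definition legal_pos p := forall j a, p j = Some a -> legal j a.

Lemma coefs_assign p i a j : coefs (assign p i a) j = if j == i then a else coefs p j.
Proof. by rewrite /coefs /assign; case: (j == i). Qed.

Lemma horner_poly_of p x : (poly_of p).[x] = \sum_j coefs p j * x ^+ j.
Proof. by rewrite /poly_of horner_sum; apply: eq_bigr => j _; rewrite hornerZ hornerXn. Qed.

Lemma coef_poly_of p j : (poly_of p)`_j = coefs p j.
Proof.
rewrite /poly_of coef_sum (bigD1 j) //= coefZ coefXn eqxx mulr1 big1 ?addr0 // => k kj.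
by rewrite coefZ coefXn val_eqE eq_sym (negbTE kj) mulr0.
Qed.

Lemma poly_of_assign p i a : p i = None -> poly_of (assign p i a) = poly_of p + a *: 'X^i.
Proof.
move=> pi_free; rewrite /poly_of [in LHS](bigD1 i) // [in RHS](bigD1 i) //=.
rewrite /assign eqxx pi_free scale0r add0r addrC; congr (_ + _).
by apply: eq_bigr => j /negbTE ->.
Qed.

Lemma legal_pos_assign p i a : legal_pos p -> legal i a -> legal_pos (assign p i a).
Proof. by move=> lp la j b; rewrite /assign; case: eqP => [-> [<-]|_] //; exact: lp. Qed.

Lemma coefs_end_neq0 p j : legal_pos p -> p j != None ->
  ((j : nat) = 0%N \/ (j : nat) = d) -> coefs p j != 0.
Proof. by move=> lp; rewrite /coefs; case pj: (p j) => [a|] // _; apply: lp pj. Qed.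

Lemma nchosen_assign p i a : p i = None -> nchosen (assign p i a) = (nchosen p).+1.
Proof.
move=> pi_free; rewrite /nchosen (cardD1 i) [in RHS](cardD1 i) !inE /assign eqxx pi_free.
by congr _.+1; apply: eq_card => j; rewrite !inE; case: (eqVneq j i).
Qed.

Lemma nchosen_empty : nchosen (fun _ : 'I_d.+1 => None : option K) = 0%N.
Proof. exact: eq_card0. Qed.

Lemma nchosen_add_free p : (nchosen p + #|[pred j | p j == None]|)%N = d.+1.
Proof.
rewrite -[RHS](card_ord d.+1) -(cardC [pred j | isSome (p j)]).
by congr (_ + _); apply: eq_card => j; rewrite !inE; case: (p j).
Qed.

Lemma exists_free p : (nchosen p <= d)%N -> exists i, p i = None.
Proof.
move=> pd; case: (pickP [pred j | p j == None]) => [i /eqP|none]; first by exists i.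
by move: (nchosen_add_free p); rewrite (eq_card0 none); lia.
Qed.

Lemma unique_free p : nchosen p = d ->
  exists i, p i = None /\ forall j, j != i -> p j != None.
Proof.
move=> pd; have [i pi_free] := exists_free (eq_leq pd).
exists i; split => // j ji; apply/negP => /eqP pj_free.
move: (nchosen_add_free p); rewrite pd (cardD1 i) (cardD1 j) !inE pi_free pj_free ji eqxx.
lia.
Qed.

Lemma last_mover_turn first c :
  player_eqb (mover_at first c) (last_mover d first) = (odd c == odd d).
Proof. by rewrite /last_mover /mover_at; case: (odd c); case: (odd d); case: first. Qed.

(* With n.+2 moves left, the last mover is to move iff n is odd. *)
Lemma can_force_of_invariant first (Inv : nat -> position K d -> Prop) :
  (forall p, Inv 1%N p -> nchosen p = d -> exists i a,
     [/\ p i = None, legal i a & wins_final (last_mover d first) (assign p i a)]) ->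
  (forall n p, Inv n.+2 p -> (nchosen p + n.+2)%N = d.+1 -> odd n ->
     exists i a, [/\ p i = None, legal i a & Inv n.+1 (assign p i a)]) ->
  (forall n p i a, Inv n.+2 p -> (nchosen p + n.+2)%N = d.+1 -> ~~ odd n ->
     p i = None -> legal i a -> Inv n.+1 (assign p i a)) ->
  forall n p, Inv n.+1 p -> (nchosen p + n.+1)%N = d.+1 ->
    can_force first (last_mover d first) n.+1 p.
Proof.
move=> final own other; elim=> [|n IHn] p inv_p hp.
  have pd : nchosen p = d by lia.
  by rewrite /= last_mover_turn pd eqxx; apply: final.
have turn : (odd (nchosen p) == odd d) = odd n.
  have -> : odd d = odd (nchosen p + n.+1) by congr odd; lia.
  by rewrite oddD /=; case: (odd (nchosen p)); case: (odd n).
rewrite /= last_mover_turn turn; case: ifP => n_odd.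
  have [i [a [pi_free la inv_a]]] := own n p inv_p hp n_odd.
  by exists i, a; split => //; apply: IHn; rewrite // nchosen_assign //; lia.
move=> i a pi_free la; apply: IHn; first by apply: other; rewrite ?n_odd.
by rewrite nchosen_assign //; lia.
Qed.

End Game.

(** * Wanda moves last *)

Lemma exists_nonroot (K : fieldType) (f : nat -> K) : injective f ->
  forall g : {poly K}, g != 0 -> exists x, ~~ root g x.
Proof.
move=> f_inj g g0; have [all_roots|] := boolP (all (root g) (mkseq f (size g))).
  by have := max_poly_roots g0 all_roots (mkseq_uniq _ f_inj); rewrite size_mkseq ltnn.
by case/allPn => x _ gx; exists x.
Qed.

Section LastMoverWanda.

Variables (K : fieldType) (d : nat) (f : nat -> K).
Hypotheses (d_gt0 : (0 < d)%N) (f_inj : injective f).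

Lemma wanda_last_move (p : position K d) i : p i = None ->
  (forall j, j != i -> p j != None) -> legal_pos p ->
  exists a, legal i a /\ exists x, root (poly_of (assign p i a)) x.
Proof.
move=> pi_free full lp; set g := poly_of p.
pose k : 'I_d.+1 := if i == ord0 then ord_max else ord0.
have ki : k != i.
  rewrite /k; case: (eqVneq i ord0) => [->|i0]; last by rewrite eq_sym.
  by rewrite -(inj_eq val_inj) /= -lt0n.
have g0 : g != 0.
  have k_end : (k : nat) = 0%N \/ (k : nat) = d by rewrite /k; case: (i == ord0); [right | left].
  apply: contraNneq (coefs_end_neq0 lp (full k ki) k_end) => g0.
  by rewrite -coef_poly_of -/g g0 coef0.
have [x] := exists_nonroot f_inj (mulf_neq0 (negbT (polyX_eq0 K)) g0).
rewrite rootM rootX negb_or => /andP[x0 gx].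
exists (- g.[x] / x ^+ i); split.
  by move=> _; rewrite mulf_neq0 ?oppr_eq0 ?invr_eq0 ?expf_neq0.
exists x; rewrite /root poly_of_assign // hornerD hornerZ hornerXn -/g.
by rewrite mulfVK ?expf_neq0 // subrr.
Qed.

Lemma wanda_wins first : last_mover d first = Wanda ->
  has_winning_strategy K d first (last_mover d first).
Proof.
move=> wanda_last.
apply: (@can_force_of_invariant _ _ first (fun _ p => legal_pos p)).
- move=> p lp pd; have [i [pi_free full]] := unique_free pd.
  have [a [la wins]] := wanda_last_move pi_free full lp.
  by exists i, a; rewrite wanda_last.
- move=> n p lp pn _; have [i pi_free] : exists i, p i = None by apply: exists_free; lia.
  have l1 : legal i (1 : K) by move=> _; apply: oner_neq0.
  by exists i, 1; split => //; apply: legal_pos_assign.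
- by move=> n p i a lp _ _ _; apply: legal_pos_assign.
- by [].
- by rewrite nchosen_empty.
Qed.

End LastMoverWanda.

(** * Nora's invariant *)

(* The inner positions that are not isolable. *)
Definition critical (d j : nat) := [&& 0 < j, j < d & [|| j == 1, j == d.-1 | d <= 4]]%N.

Lemma isolable_of_not_critical (d j : nat) : (j <= d)%N -> ~~ critical d j -> isolable d j.
Proof. by rewrite /critical /isolable; lia. Qed.

Section CriticalPositions.

Variables (K : fieldType) (d : nat).
Implicit Types (p : position K d) (i j : 'I_d.+1).

Definition free_critical p := #|[pred j | (p j == None) && critical d j]|.

Definition inner_zero p := forall j, (0 < j < d)%N -> coefs p j = 0.

Lemma free_critical_assign p i a : p i = None ->
  (free_critical (assign p i a) + critical d i)%N = free_critical p.
Proof.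
move=> pi_free; rewrite /free_critical [in RHS](cardD1 i) !inE pi_free eqxx /= addnC.
by congr (_ + _); apply: eq_card => j; rewrite !inE /assign; case: (eqVneq j i) => [->|].
Qed.

Lemma free_critical_gt0 p i : p i = None -> critical d i -> (0 < free_critical p)%N.
Proof. by move=> pi_free ci; apply/card_gt0P; exists i; rewrite !inE pi_free eqxx. Qed.

Lemma free_critical_le p : (0 < d)%N -> (free_critical p + 2 <= d.+1)%N.
Proof.
move=> d_gt0; rewrite -[d.+1](card_ord d.+1).
rewrite -(cardC [pred j | (p j == None) && critical d j]) leq_add2l.
have ends : ord_max != ord0 :> 'I_d.+1 by rewrite -(inj_eq val_inj) /= -lt0n.
by rewrite (cardD1 ord0) (cardD1 ord_max) !inE ends /= /critical /= ltnn !andbF.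
Qed.

Lemma free_critical_le2 p : (5 <= d)%N -> (free_critical p <= 2)%N.
Proof.
move=> d5; apply: (@leq_trans #|pred2 (inord 1 : 'I_d.+1) (inord d.-1)|); last first.
  by rewrite card2; case: (_ != _).
apply/subset_leq_card/subsetP => j; rewrite !inE /critical.
rewrite (leqNgt d 4) d5 orbF => /andP[_ /and3P[_ _ /orP[] /eqP jE]]; apply/orP; [left | right]; apply/eqP/val_inj;
  by rewrite /= jE inordK //; lia.
Qed.

(* n is the number of remaining moves. *)
Definition nora_inv (n : nat) p := legal_pos p /\
  ((2 * free_critical p < n)%N \/
   [/\ (d <= 4)%N, inner_zero p & (2 * free_critical p <= n.+1)%N]).

Lemma nora_inv_start : (1 < d)%N -> nora_inv d.+1 (fun _ => None).
Proof.
move=> d_gt1; split=> [//|]; have [d4|d5] := leqP d 4.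
  by right; split=> //; have := free_critical_le (fun _ => None) (ltnW d_gt1); lia.
by left; have := free_critical_le2 (fun _ => None) d5; lia.
Qed.

Lemma nora_inv_own n p : nora_inv n.+2 p -> (nchosen p + n.+2)%N = d.+1 ->
  exists i a, [/\ p i = None, legal i a & nora_inv n.+1 (assign p i a)].
Proof.
move=> [lp inv] hp; pose v j : K := if critical d j then 0 else 1.
have lv j : legal j (v j).
  rewrite /v; case: ifP => [cj jE | _ _]; last exact: oner_neq0.
  by move: cj; rewrite /critical; case: jE => ->; rewrite ?ltnn ?andbF.
case: (pickP [pred j | (p j == None) && critical d j]) => [i /andP[/eqP pi_free ci] | none].
  exists i, (v i); split=> //; split; first exact: legal_pos_assign.
  have := free_critical_assign (v i) pi_free; rewrite ci.
  case: inv => [inv|[d4 zero inv]]; first by left; lia.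
  right; split=> //; last by lia.
  move=> j jm; rewrite coefs_assign /v; case: (eqVneq j i) => [_|_]; first by rewrite ci.
  exact: zero.
have [i pi_free] : exists i, p i = None by apply: exists_free; lia.
have fc0 : free_critical p = 0%N by apply: eq_card0.
exists i, (v i); split=> //; split; first exact: legal_pos_assign.
by left; have := free_critical_assign (v i) pi_free; lia.
Qed.

Lemma nora_inv_other n p i a : nora_inv n.+2 p -> ~~ odd n -> p i = None -> legal i a ->
  nora_inv n.+1 (assign p i a).
Proof.
move=> [lp inv] n_even pi_free la; split; first exact: legal_pos_assign.
have [k nE] : exists k, n = (2 * k)%N.
  by exists n./2; rewrite mul2n -[n in LHS]odd_double_half (negbTE n_even).
have := free_critical_assign a pi_free; case ci: (critical d i) => fc.
  by left; case: inv => [|[_ _]]; lia.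
case: inv => [|[d4 zero inv]]; first by left; lia.
right; split=> //; last by lia.
move=> j jm; rewrite coefs_assign; case: (eqVneq j i) => [jE|_]; last exact: zero.
by move: ci jm; rewrite /critical -jE d4 !orbT andbT => ->.
Qed.

End CriticalPositions.

(** * Valuations *)

Section DiscreteValuation.

Variables (R : idomainType) (K : fieldType) (iota : {rmorphism R -> K}) (pi : R).
Hypotheses (pi_neq0 : pi != 0) (pi_nonunit : pi \isn't a GRing.unit).
Hypothesis iota_inj : injective iota.

Local Notation rho := (iota pi).

Lemma rho_neq0 : rho != 0.
Proof. by rewrite raddf_eq0. Qed.

Lemma injective_rho_exp : injective (fun n : nat => rho ^+ n).
Proof.
have pi_exp_neq1 k : (0 < k)%N -> pi ^+ k != 1.
  by move=> k0; apply: contraNneq pi_nonunit => pik1; rewrite -(unitrX_pos _ k0) pik1 unitr1.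
suff lt_neq m n : (m < n)%N -> rho ^+ m != rho ^+ n.
  move=> m n /= eq_mn; case: (ltngtP m n) => // [/lt_neq|/lt_neq];
  by rewrite eq_mn eqxx.
move=> mn; rewrite -(subnKC (ltnW mn)) exprD -{1}[rho ^+ m]mulr1.
rewrite (inj_eq (mulfI (expf_neq0 _ rho_neq0))) eq_sym -rmorphXn -(rmorph1 iota).
by rewrite (inj_eq iota_inj) pi_exp_neq1 // subn_gt0.
Qed.

Hypothesis unit_pi_exp :
  forall x : R, x != 0 -> exists (u : R) (n : nat), u \is a GRing.unit /\ x = u * pi ^+ n.
Hypothesis iota_frac : forall k : K, exists a b : R, b != 0 /\ k = iota a / iota b.

(* v(x) >= e (including x = 0) and v(x) = e, without a valuation function. *)
Definition val_ge (e : int) (x : K) := exists r : R, x = iota r * rho ^ e.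
Definition val_eq (e : int) (x : K) :=
  exists2 u : R, u \is a GRing.unit & x = iota u * rho ^ e.

Lemma val_eq_ge e x : val_eq e x -> val_ge e x.
Proof. by case=> u _ ->; exists u. Qed.

Lemma val_ge0 e : val_ge e 0.
Proof. by exists 0; rewrite rmorph0 mul0r. Qed.

Lemma val_geD e x y : val_ge e x -> val_ge e y -> val_ge e (x + y).
Proof. by case=> r -> [s ->]; exists (r + s); rewrite rmorphD mulrDl. Qed.

Lemma val_ge_sum (I : Type) (r : seq I) (P : pred I) (F : I -> K) e :
  (forall i, P i -> val_ge e (F i)) -> val_ge e (\sum_(i <- r | P i) F i).
Proof. by move=> h; apply: big_ind; [exact: val_ge0 | exact: val_geD | exact: h]. Qed.

Lemma val_geW e f x : e <= f -> val_ge f x -> val_ge e x.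
Proof.
move=> lef [r ->]; exists (r * pi ^+ `|f - e|%N).
rewrite rmorphM rmorphXn -mulrA; congr (_ * _).
rewrite -[rho ^+ _]/(rho ^ (Posz _)) -expfzDr ?rho_neq0 //; congr (_ ^ _); lia.
Qed.

Lemma val_geM e f x y : val_ge e x -> val_ge f y -> val_ge (e + f) (x * y).
Proof.
case=> r -> [s ->]; exists (r * s).
by rewrite expfzDr ?rho_neq0 // rmorphM mulrACA.
Qed.

Lemma val_eqM e f x y : val_eq e x -> val_eq f y -> val_eq (e + f) (x * y).
Proof.
case=> u uu -> [v uv ->]; exists (u * v); first by rewrite unitrM uu uv.
by rewrite expfzDr ?rho_neq0 // rmorphM mulrACA.
Qed.

Lemma unit_rho_expX u e (n : nat) :
  (iota u * rho ^ e) ^+ n = iota (u ^+ n) * rho ^ (n%:Z * e).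
Proof. by rewrite exprMn rmorphXn [_ * e]mulrC -exprz_exp. Qed.

Lemma val_eqX e x (n : nat) : val_eq e x -> val_eq (n%:Z * e) (x ^+ n).
Proof. by case=> u uu ->; exists (u ^+ n); rewrite ?unitrX ?unit_rho_expX. Qed.

Lemma val_eq_exp e : val_eq e (rho ^ e).
Proof. by exists 1; rewrite ?unitr1 // rmorph1 mul1r. Qed.

Lemma val_eq_neq0 e x : val_eq e x -> x != 0.
Proof.
case=> u uu ->; rewrite mulf_neq0 ?expfz_neq0 ?rho_neq0 // raddf_eq0 //.
by apply: contraTneq uu => ->; rewrite unitr0.
Qed.

Lemma val_eq_term e m c x (j : nat) :
  val_eq e c -> val_eq m x -> val_eq (e + j%:Z * m) (c * x ^+ j).
Proof. by move=> hc hx; apply: val_eqM hc (val_eqX j hx). Qed.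

Lemma val_eqD_gt e x y : val_eq e x -> val_ge (e + 1) y -> x + y != 0.
Proof.
case=> u uu -> [r ->]; rewrite expfzDr ?rho_neq0 // expr1z.
have -> : iota u * rho ^ e + iota r * (rho ^ e * rho) = iota (u + r * pi) * rho ^ e.
  by rewrite rmorphD rmorphM; ring.
rewrite mulf_neq0 ?expfz_neq0 ?rho_neq0 // raddf_eq0 //.
apply: contraNneq pi_nonunit => /eqP; rewrite addr_eq0 => /eqP u_eq.
by move: uu; rewrite u_eq unitrN unitrM => /andP[].
Qed.

Lemma val_eqD_neq0 e f x y : val_eq e x -> val_eq f y -> e != f -> x + y != 0.
Proof.
move=> ex fy; rewrite neq_lt => /orP[] lt_ef; last rewrite addrC.
  by apply: val_eqD_gt ex (val_geW _ (val_eq_ge fy)); rewrite lezD1.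
by apply: val_eqD_gt fy (val_geW _ (val_eq_ge ex)); rewrite lezD1.
Qed.

Lemma val_eq_exists x : x != 0 -> exists e, val_eq e x.
Proof.
move=> x0; have [a [b [b0 xE]]] := iota_frac x.
have a0 : a != 0 by apply: contraNneq x0 => a0; rewrite xE a0 rmorph0 mul0r.
rewrite xE.
have [ua [na [uua ->]]] := unit_pi_exp a0.
have [ub [nb [uub ->]]] := unit_pi_exp b0.
exists (na%:Z - nb%:Z); exists (ua / ub); first by rewrite unitrMr ?unitrV.
rewrite !rmorphM rmorphV // expfzDr ?rho_neq0 // -exprnN -!rmorphXn invfM.
rewrite -[rho ^ na]/(rho ^+ na) rmorphXn; ring.
Qed.

Lemma sum_dominant_neq0 (n : nat) (F : 'I_n -> K) (j0 : 'I_n) e :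
  val_eq e (F j0) -> (forall j, j != j0 -> val_ge (e + 1) (F j)) ->
  \sum_j F j != 0.
Proof.
move=> dom rest; rewrite (bigD1 j0) //=.
by apply: val_eqD_gt dom _; apply: val_ge_sum.
Qed.


Definition pi_cong (a b : R) := dvdR pi (a - b).

Lemma pi_cong_refl a : pi_cong a a.
Proof. by exists 0; rewrite subrr mulr0. Qed.

Lemma pi_cong_sym a b : pi_cong a b -> pi_cong b a.
Proof. by case=> c hc; exists (- c); rewrite mulrN -hc opprB. Qed.

Lemma pi_cong_trans a b c : pi_cong a b -> pi_cong b c -> pi_cong a c.
Proof. by case=> x hx [y hy]; exists (x + y); rewrite mulrDr -hx -hy subrKA. Qed.

Lemma pi_congD a b a' b' : pi_cong a b -> pi_cong a' b' -> pi_cong (a + a') (b + b').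
Proof. by case=> x hx [y hy]; exists (x + y); rewrite mulrDr -hx -hy opprD addrACA. Qed.

Lemma pi_congN a b : pi_cong a b -> pi_cong (- a) (- b).
Proof. by case=> x hx; exists (- x); rewrite mulrN -hx opprD. Qed.

Lemma pi_congM a b a' b' : pi_cong a b -> pi_cong a' b' -> pi_cong (a * a') (b * b').
Proof.
case=> x hx [y hy]; exists (a * y + x * b').
have -> : a * a' - b * b' = a * (a' - b') + (a - b) * b' by ring.
by rewrite hx hy; ring.
Qed.

Lemma pi_congX a b n : pi_cong a b -> pi_cong (a ^+ n) (b ^+ n).
Proof.
move=> ab; elim: n => [|n IHn]; first exact: pi_cong_refl.
by rewrite !exprS; apply: pi_congM.
Qed.

Lemma pi_congV a b : a \is a GRing.unit -> b \is a GRing.unit ->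
  pi_cong a b -> pi_cong a^-1 b^-1.
Proof.
move=> ua ub [x hx]; exists (- (a^-1 * x * b^-1)).
have -> : a^-1 - b^-1 = - (a^-1 * (a - b) * b^-1).
  by rewrite mulrBr mulrBl mulrK // mulVr // mul1r opprB.
by rewrite hx; ring.
Qed.

Lemma pi_cong0_nonunit y : pi_cong y 0 -> y \isn't a GRing.unit.
Proof. by case=> c; rewrite subr0 => ->; rewrite unitrM negb_and pi_nonunit. Qed.

Lemma pi_cong_unit y t : y \is a GRing.unit -> pi_cong y t -> t \is a GRing.unit.
Proof.
move=> uy yt; have [t0|t0] := eqVneq t 0.
  by move: yt; rewrite t0 => /pi_cong0_nonunit; rewrite uy.
have [u [[|k] [uu tE]]] := unit_pi_exp t0; first by rewrite tE expr0 mulr1.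
suff : pi_cong y 0 by move/pi_cong0_nonunit; rewrite uy.
by apply: pi_cong_trans yt _; exists (u * pi ^+ k); rewrite tE subr0 exprS; ring.
Qed.

Hypothesis finite_res : finite_residue pi.

Lemma exists_residue_avoiding (phi : R -> R) :
  (forall y t, y \is a GRing.unit -> t \is a GRing.unit -> pi_cong y t ->
     pi_cong (phi y) (phi t)) ->
  exists c, forall y, y \is a GRing.unit -> ~ pi_cong (phi y) c.
Proof.
(* Either the images of the units of a covering list L miss a residue class, or they form
   a shorter covering list: L covers 0 by a non-unit. *)
move=> phi_cong; have [s cover_s] := finite_res.
move: {2}(size s) (leqnn (size s)) cover_s => n; elim: n s => [|n IHn] L sizeL coverL.
  by have [y] := coverL 0; case: L sizeL {coverL}.
pose L' := [seq phi t | t <- L & t \is a GRing.unit].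
have [coverL'|] := classic (forall x, exists2 y, y \in L' & pi_cong x y).
  apply: IHn coverL'; rewrite size_map size_filter -ltnS (leq_trans _ sizeL) //.
  rewrite ltn_neqAle count_size andbT -all_count; apply/allPn.
  have [t0 t0L /pi_cong_sym t0_cong0] := coverL 0.
  by exists t0 => //; apply: pi_cong0_nonunit.
move=> /not_all_ex_not [c not_covered]; exists c => y uy yc; apply: not_covered.
have [t tL yt] := coverL y; have ut := pi_cong_unit uy yt.
exists (phi t); first by apply: map_f; rewrite mem_filter ut.
exact: pi_cong_trans (pi_cong_sym yc) (phi_cong y t uy ut yt).
Qed.


(** * Nora moves last *)

Variable d : nat.
Hypothesis d_gt1 : (1 < d)%N.

Lemma newton_vertex_no_root (c : 'I_d.+1 -> K) (e : 'I_d.+1 -> int) (i : 'I_d.+1) :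
  c ord0 != 0 -> c ord_max != 0 -> c i != 0 ->
  (forall j, c j != 0 -> val_eq (e j) (c j)) ->
  (ord0 != i -> ~~ (i%:Z %| e ord0 - e i)%Z) ->
  (i != ord_max -> ~~ (d%:Z - i%:Z %| e i - e ord_max)%Z) ->
  ((0 < i < d)%N -> d%:Z * e i < (d%:Z - i%:Z) * e ord0 + i%:Z * e ord_max) ->
  (forall j, c j != 0 -> (0 < j < i)%N ->
     (i%:Z - j%:Z) * e ord0 + j%:Z * e i < i%:Z * e j) ->
  (forall j, c j != 0 -> (i < j < d)%N ->
     (d%:Z - j%:Z) * e i + (j%:Z - i%:Z) * e ord_max < (d%:Z - i%:Z) * e j) ->
  forall x, \sum_j c j * x ^+ j != 0.
Proof.
move=> c0 cd ci ce slope_left slope_right vertex_below above_left above_right x.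
have [->|x0] := eqVneq x 0.
  rewrite big_ord_recl expr0 mulr1 big1 ?addr0 // => j _.
  by rewrite expr0n /= mulr0.
have [m xm] := val_eq_exists x0.
pose T j := e j + (j : nat)%:Z * m.
have [j0 cj0 strict] : exists2 j0, c j0 != 0 & forall j, c j != 0 -> j != j0 -> T j0 < T j.
  apply: (@exists_strict_argmin _ (fun j => c j != 0) T ord0 c0).
  apply: (@anchors_no_tie d i (fun j => c j != 0) T c0 ci cd).
  - move=> i0; apply: contraNneq (slope_left i0) => /dvdz_of_tie.
    by rewrite subr0.
  - by move=> id; apply: contraNneq (slope_right id) => /dvdz_of_tie.
  - move=> i0 id tie.
    have i_mid : (0 < i < d)%N by rewrite ord_inner eq_sym i0.
    have := @lt_below_chord 0 i d (e ord0) (e ord_max) (e i) m.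
    rewrite /T /= !subr0 !mul0r !addr0 in tie *; apply; rewrite ?ltz_nat //.
    exact: vertex_below.
  - move=> j cj jm; have := @min_lt_above_chord 0 j i (e ord0) (e i) (e j) m.
    rewrite /T /= !subr0 !mul0r !addr0; apply; rewrite ?ltz_nat //.
    exact: above_left.
  - move=> j cj jm; have := @min_lt_above_chord i j d (e i) (e ord_max) (e j) m.
    by apply; rewrite ?ltz_nat //; apply: above_right.
apply: (sum_dominant_neq0 (j0 := j0) (e := T j0)); first exact: val_eq_term (ce _ cj0) xm.
move=> j jj0; have [-> | cj] := eqVneq (c j) 0; first by rewrite mul0r; apply: val_ge0.
by apply: val_geW (val_eq_ge (val_eq_term _ (ce _ cj) xm)); rewrite lezD1 strict.
Qed.

Lemma exists_coef_valuations (c : 'I_d.+1 -> K) :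
  exists e : 'I_d.+1 -> int, forall j, c j != 0 -> val_eq (e j) (c j).
Proof.
apply: (@fin_all_exists _ (fun _ => int) (fun j z => c j != 0 -> val_eq z (c j))) => j.
have [-> | cj] := eqVneq (c j) 0; first by exists 0.
by have [e ?] := val_eq_exists cj; exists e.
Qed.

Lemma nora_isolable_move (p : position K d) (i : 'I_d.+1) :
  p i = None -> (forall j, j != i -> p j != None) -> legal_pos p -> isolable d i ->
  exists a, legal i a /\ ~ exists x, root (poly_of (assign p i a)) x.
Proof.
move=> pi_free full lp iso_i; have [e ce] := exists_coef_valuations (coefs p).
pose S := \sum_j `|e j|.
have eS j : `|e j| <= S.
  by rewrite /S (bigD1 j) //= lerDl sumr_ge0 // => k _; apply: normr_ge0.
have [E [EX slope_left slope_right]] :=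
  exists_vertex_exponent (e ord0) (e ord_max) (- (2 * d%:Z * S + 1)) d_gt1 iso_i.
have a0 : rho ^ E != 0 := val_eq_neq0 (val_eq_exp E).
exists (rho ^ E); split=> [_ //|[x]]; apply/negP; rewrite /root horner_poly_of.
pose e' j := if j == i then E else e j.
have e'E j : j != i -> e' j = e j by move=> /negbTE ji; rewrite /e' ji.
have e'i : e' i = E by rewrite /e' eqxx.
have c_end (j : 'I_d.+1) :
    ((j : nat) = 0%N \/ (j : nat) = d) -> coefs (assign p i (rho ^ E)) j != 0.
  rewrite coefs_assign; case: (eqVneq j i) => [// | ji jend].
  exact: coefs_end_neq0 lp (full j ji) jend.
have e'S j : j != i -> `|e' j| <= S by move=> ji; rewrite e'E.
have e'iX : e' i <= - (2 * d%:Z * S + 1) by rewrite e'i.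
have [far_mid far_left far_right] := vertex_far_below e'S e'iX.
apply: (@newton_vertex_no_root _ e' i) => //.
- by apply: c_end; left.
- by apply: c_end; right.
- by rewrite coefs_assign eqxx.
- move=> j; rewrite coefs_assign /e'; case: (j == i) => [_|]; [exact: val_eq_exp | exact: ce].
- by move=> i0; rewrite e'i e'E //; apply: slope_left.
- by move=> id; rewrite e'i e'E; [apply: slope_right | rewrite eq_sym].
- by move=> j _; apply: far_left.
- by move=> j _; apply: far_right.
Qed.

Lemma trinomial_at0 (i : nat) (c0 a cd : K) : (0 < i < d)%N ->
  c0 + a * 0 ^+ i + cd * 0 ^+ d = c0.
Proof.
by move=> /andP[i0 id]; rewrite !expr0n /= (gtn_eqF i0) (gtn_eqF (ltn_trans i0 id)) !mulr0 !addr0.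
Qed.

Lemma binomial_no_root (i : nat) (c0 cd : K) (e0 ed : int) : (0 < i < d)%N ->
  val_eq e0 c0 -> val_eq ed cd -> ~~ (d%:Z %| e0 - ed)%Z ->
  forall x, c0 + 0 * x ^+ i + cd * x ^+ d != 0.
Proof.
move=> i_mid c0v cdv not_dvd x; have [->|x0] := eqVneq x 0.
  by rewrite trinomial_at0 // (val_eq_neq0 c0v).
have [m xm] := val_eq_exists x0; rewrite mul0r addr0.
apply: val_eqD_neq0 c0v (val_eq_term d cdv xm) _.
by apply: contraNneq not_dvd => tie; apply/dvdzP; exists m; rewrite tie; ring.
Qed.

Lemma trinomial_on_slope (w0 c' wd u : R) (e0 ed k : int) (i : nat) : e0 - ed = k * d%:Z ->
  iota w0 * rho ^ e0 + iota c' * rho ^ (e0 - i%:Z * k) * (iota u * rho ^ k) ^+ i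
    + iota wd * rho ^ ed * (iota u * rho ^ k) ^+ d
  = iota (w0 + c' * u ^+ i + wd * u ^+ d) * rho ^ e0.
Proof.
move=> slope; rewrite !unit_rho_expX !rmorphD !mulrDl; congr (_ + _ + _).
  have <- : rho ^ (e0 - i%:Z * k) * rho ^ (i%:Z * k) = rho ^ e0.
    by rewrite -expfzDr ?rho_neq0 // subrK.
  by rewrite rmorphM; ring.
have <- : rho ^ ed * rho ^ (d%:Z * k) = rho ^ e0.
  by rewrite -expfzDr ?rho_neq0 //; congr (_ ^ _); rewrite [_ * k]mulrC -slope; ring.
by rewrite rmorphM; ring.
Qed.

Lemma collinear_trinomial_no_root (i : nat) (c0 cd : K) (e0 ed k : int) : (0 < i < d)%N ->
  val_eq e0 c0 -> val_eq ed cd -> e0 - ed = k * d%:Z ->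
  exists a, forall x, c0 + a * x ^+ i + cd * x ^+ d != 0.
Proof.
move=> i_mid c0v cdv slope; have [w0 uw0 c0E] := c0v; have [wd uwd cdE] := cdv.
pose phi y := - (wd * y ^+ d + w0) * y^-1 ^+ i.
have [c' avoid] : exists c', forall y, y \is a GRing.unit -> ~ pi_cong (phi y) c'.
  apply: exists_residue_avoiding => y t uy ut yt.
  apply: pi_congM; last by apply: pi_congX; apply: pi_congV.
  apply: pi_congN; apply: pi_congD (pi_cong_refl _).
  exact: pi_congM (pi_cong_refl _) (pi_congX _ yt).
exists (iota c' * rho ^ (e0 - i%:Z * k)) => x; have [->|x0] := eqVneq x 0.
  by rewrite trinomial_at0 // (val_eq_neq0 c0v).
have [m xm] := val_eq_exists x0.
have ax : val_ge (e0 - i%:Z * k + i%:Z * m) (iota c' * rho ^ (e0 - i%:Z * k) * x ^+ i).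
  by apply: val_geM (val_eq_ge (val_eqX i xm)); exists c'.
have cdx := val_eq_term d cdv xm.
have [tilt1 tilt2 tilt3 tilt4] := collinear_tilt m (i_mid : 0 < i%:Z < d%:Z) slope.
case: (ltgtP m k) => [mk|km|mk].
- rewrite addrC; apply: val_eqD_gt cdx (val_geD _ _).
    exact: val_geW (tilt1 mk) (val_eq_ge c0v).
  exact: val_geW (tilt2 mk) ax.
- rewrite -addrA; apply: val_eqD_gt c0v (val_geD _ _).
    exact: val_geW (tilt3 km) ax.
  exact: val_geW (tilt4 km) (val_eq_ge cdx).
have [u uu xE] := xm; rewrite c0E cdE xE mk trinomial_on_slope //.
rewrite mulf_neq0 ?expfz_neq0 ?rho_neq0 // raddf_eq0 //.
apply/eqP => sum0; apply: (avoid u uu).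
suff -> : phi u = c' by apply: pi_cong_refl.
rewrite /phi; have -> : - (wd * u ^+ d + w0) = c' * u ^+ i.
  by transitivity (c' * u ^+ i - (w0 + c' * u ^+ i + wd * u ^+ d)); [ring | rewrite sum0 subr0].
by rewrite -mulrA -exprMn mulrV // expr1n mulr1.
Qed.

Lemma trinomial_no_root (i : nat) (c0 cd : K) : (0 < i < d)%N -> c0 != 0 -> cd != 0 ->
  exists a, forall x, c0 + a * x ^+ i + cd * x ^+ d != 0.
Proof.
move=> i_mid /val_eq_exists[e0 c0v] /val_eq_exists[ed cdv].
have [/dvdzP[k slope]|not_dvd] := boolP (d%:Z %| e0 - ed)%Z.
  exact: collinear_trinomial_no_root slope.
by exists 0; apply: binomial_no_root not_dvd.
Qed.

Lemma nora_trinomial_move (p : position K d) (i : 'I_d.+1) :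
  p i = None -> (forall j, j != i -> p j != None) -> legal_pos p ->
  (0 < i < d)%N -> inner_zero p ->
  exists a, legal i a /\ ~ exists x, root (poly_of (assign p i a)) x.
Proof.
move=> pi_free full lp i_mid zero.
have [i0 id] : ord0 != i /\ ord_max != i.
  by move: i_mid; rewrite ord_inner => /andP[]; rewrite !(eq_sym i) => -> ->.
have [a no_root] := trinomial_no_root i_mid
  (coefs_end_neq0 lp (full _ i0) (or_introl erefl))
  (coefs_end_neq0 lp (full _ id) (or_intror erefl)).
exists a; split=> [iE|[x]].
  by move: i_mid; case: iE => ->; rewrite ?ltnn ?andbF.
rewrite /root poly_of_assign // hornerD hornerZ hornerXn horner_poly_of.
by rewrite sum_ends ?(ltn_trans _ d_gt1) // addrAC; apply/negP.
Qed.

Lemma nora_last_move (p : position K d) : nora_inv 1 p -> nchosen p = d ->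
  exists i a, [/\ p i = None, legal i a & ~ exists x, root (poly_of (assign p i a)) x].
Proof.
move=> [lp inv] pd; have [i [pi_free full]] := unique_free pd.
suff [a [la no_root]] : exists a, legal i a /\ ~ exists x, root (poly_of (assign p i a)) x.
  by exists i, a.
have [ci|nci] := boolP (critical d i).
  case: inv => [|[d4 zero _]]; first by have := free_critical_gt0 pi_free ci; lia.
  by apply: nora_trinomial_move => //; case/and3P: ci => -> ->.
by apply: nora_isolable_move => //; apply: isolable_of_not_critical; rewrite -1?ltnS.
Qed.

Lemma nora_wins first : last_mover d first = Nora ->
  has_winning_strategy K d first (last_mover d first).
Proof.
move=> nora_last; apply: (@can_force_of_invariant _ _ first (@nora_inv K d)).
- move=> p inv pd; have [i [a [pi_free la no_root]]] := nora_last_move inv pd.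
  by exists i, a; rewrite nora_last.
- by move=> n p inv hp _; apply: nora_inv_own.
- by move=> n p i a inv _ n_even; apply: nora_inv_other.
- exact: nora_inv_start.
- by rewrite nchosen_empty.
Qed.

End DiscreteValuation.

Theorem theorem3 (R : idomainType) (K : fieldType) (iota : {rmorphism R -> K}) :
  complete_dvr_finite_residue R ->
  is_fraction_field iota ->
  forall (d : nat), (1 < d)%N ->
  forall first : player, has_winning_strategy K d first (last_mover d first).
Proof.
move=> [pi [[pi_neq0 pi_nonunit unit_pi_exp] _ finite_res]] [iota_inj iota_frac] d d_gt1 first.
have [nora_last|wanda_last] : last_mover d first = Nora \/ last_mover d first = Wanda.
  by case: (last_mover d first); [left | right].
  exact (nora_wins pi_neq0 pi_nonunit iota_inj unit_pi_exp iota_frac finite_res d_gt1 nora_last).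
exact (wanda_wins (ltnW d_gt1) (injective_rho_exp pi_neq0 pi_nonunit iota_inj) wanda_last).
Qed.
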